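(* Let $\alpha>0$, $\beta\in\mathbb{R}$, $\gamma>0$, $d\ge1$, $c\in\mathbb{R}$, write $x=\alpha(z-\beta)$, and let $$Q(z)=\frac{\operatorname{sign}(x)}{d+1}|x|^{d+1}+c\,x,\qquad q(z)=Q'(z)=\alpha\big[|x|^d+c\big],\qquad p(z)=\frac{1}{1+e^{-Q(z)/\gamma}}.$$ Let $H(z)=\gamma\log(1+e^{Q(z)/\gamma})$ and $\mathcal{L}_m(\hat s,s)=H(\hat s)-H(s)-(\hat s-s)H'(s)$. If $c\ge\max\{\sqrt{2\gamma d},\,\gamma d-\tfrac12\}$, then $\mathcal{L}_m(\hat s,s)$ is convex in $\hat s\in\mathbb{R}$ for every $s\in\mathbb{R}$ (i.e. a convex selective matching loss with this scaling exists).
   Context: $H$ is the $\gamma$-regularized composite Softplus primitive, with link $H'(z)=q(z)p(z)$. *)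

From HB Require Import structures.
From mathcomp Require Import all_boot all_order all_algebra.
From mathcomp Require Import all_classical all_reals all_analysis.
Set Implicit Arguments. Unset Strict Implicit. Unset Printing Implicit Defensive.
Import Order.TTheory GRing.Theory Num.Theory.
Local Open Scope ring_scope.

Section SoftplusDefs.
Variable R : realType.

Definition Qsc (alpha beta d c : R) (z : R) : R :=
  let x := alpha * (z - beta) in
  Num.sg x / (d + 1) * (`|x| `^ (d + 1)) + c * x.

Definition qsc (alpha beta d c : R) (z : R) : R :=
  let x := alpha * (z - beta) in alpha * (`|x| `^ d + c).

Definition psc (alpha beta gamma d c : R) (z : R) : R :=
  1 / (1 + expR (- Qsc alpha beta d c z / gamma)).

Definition Hsc (alpha beta gamma d c : R) (z : R) : R :=
  gamma * ln (1 + expR (Qsc alpha beta d c z / gamma)).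

Definition Lm (alpha beta gamma d c : R) (shat s : R) : R :=
  Hsc alpha beta gamma d c shat - Hsc alpha beta gamma d c s
  - (shat - s) * derive1 (Hsc alpha beta gamma d c) s.

Definition convex_on_R (f : R -> R) : Prop :=
  forall a b t : R, 0 <= t -> t <= 1 ->
    f (t * a + (1 - t) * b) <= t * f a + (1 - t) * f b.

End SoftplusDefs.

(* L_m(., s) is H minus an affine function, and H is the function
   Hn := gamma * softplus (Q / gamma) of x = alpha (z - beta), so it suffices that
   Hn' = q p is nondecreasing.  On x >= 0 both factors are nonnegative and
   nondecreasing.  On x < 0, (q p)' = p (q^2 (1 - p) / gamma - d |x|^(d-1)); there
   Q <= 0, hence 1 - p >= 1/2, and the two lower bounds on c give
   2 gamma d |x|^(d-1) <= q^2 (compare |x|^(d-1) with 1 when |x| <= 1, with |x|^d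
   when |x| >= 1). *)

From HB Require Import structures.
From mathcomp Require Import all_boot all_order all_algebra.
From mathcomp Require Import all_classical all_reals all_analysis.
From mathcomp Require Import ring lra.
Set Implicit Arguments. Unset Strict Implicit. Unset Printing Implicit Defensive.
Import Order.TTheory GRing.Theory Num.Theory numFieldNormedType.Exports.
Local Open Scope ring_scope.

Section derivative_monotone_convex.
Variable R : realType.
Implicit Types (f : R -> R) (a b x y : R).

Lemma is_derive_ext f g x df dg :
  is_derive x 1 f df -> f =1 g -> df = dg -> is_derive x 1 g dg.
Proof. by move=> h /funext <- <-. Qed.

Lemma is_derive_continuous_at f x df :
  is_derive x 1 f df -> {for x, continuous f}.
Proof. by case=> /derivable1_diffP/differentiable_continuous. Qed.

Lemma MVT_continuous f f' a b : a < b -> continuous f ->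
    (forall x, a < x < b -> is_derive x 1 f (f' x)) ->
  exists2 c, a < c < b & f b - f a = f' c * (b - a).
Proof.
move=> ab cf df.
have [c] := MVT ab (fun x (xab : x \in `]a, b[) => df x xab) (continuous_subspaceT cf).
by rewrite in_itv /= => cab E; exists c.
Qed.

Lemma is_derive_ge0_le f f' a b : a <= b -> continuous f ->
    (forall x, a < x < b -> is_derive x 1 f (f' x)) ->
    (forall x, a < x < b -> 0 <= f' x) ->
  f a <= f b.
Proof.
rewrite le_eqVlt => /predU1P[-> //|ab] cf df f'_ge0.
have [c cab E] := MVT_continuous ab cf df.
by rewrite -subr_ge0 E mulr_ge0 ?f'_ge0 // subr_ge0 ltW.
Qed.

Lemma is_derive_tangent_le f f' : (forall x, is_derive x 1 f (f' x)) ->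
  {homo f' : x y / x <= y} -> forall x y, f x + f' x * (y - x) <= f y.
Proof.
move=> df f'_ndecr x y.
have cf : continuous f := fun z => is_derive_continuous_at (df z).
have [xy|yx|->] := ltgtP x y; last by rewrite subrr mulr0 addr0.
- have [c /andP[xc _] E] := MVT_continuous xy cf (fun z _ => df z).
  by rewrite -lerBrDl E ler_wpM2r ?subr_ge0 ?f'_ndecr ?ltW.
- have [c /andP[_ cx] E] := MVT_continuous yx cf (fun z _ => df z).
  have : f' c * (x - y) <= f' x * (x - y).
    by rewrite ler_wpM2r ?subr_ge0 ?f'_ndecr ?ltW.
  lra.
Qed.

Lemma convex_on_R_is_derive f f' : (forall x, is_derive x 1 f (f' x)) ->
  {homo f' : x y / x <= y} -> convex_on_R f.
Proof.
move=> df f'_ndecr a b t t0 t1; set m := t * a + (1 - t) * b.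
have ha := is_derive_tangent_le df f'_ndecr m a.
have hb := is_derive_tangent_le df f'_ndecr m b.
have ta : t * (f m + f' m * (a - m)) <= t * f a by rewrite ler_wpM2l.
have tb : (1 - t) * (f m + f' m * (b - m)) <= (1 - t) * f b.
  by rewrite ler_wpM2l // subr_ge0.
have tangent_avg : t * (f' m * (a - m)) + (1 - t) * (f' m * (b - m)) = 0.
  by rewrite /m; ring.
lra.
Qed.

Lemma convex_on_R_comp_affine f a b :
  convex_on_R f -> convex_on_R (fun z => f (a * (z - b))).
Proof.
move=> cf x y t t0 t1 /=.
have -> : a * (t * x + (1 - t) * y - b) = t * (a * (x - b)) + (1 - t) * (a * (y - b)).
  by ring.
exact: cf.
Qed.

Lemma convex_on_R_bregman f s b :
  convex_on_R f -> convex_on_R (fun x => f x - f s - (x - s) * b).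
Proof.
move=> cf x y t t0 t1 /=; have := cf x y t t0 t1; lra.
Qed.

End derivative_monotone_convex.

Section logistic.
Variable R : realType.
Implicit Types u v : R.

Definition sigmoid u : R := (1 + expR (- u))^-1.
Definition softplus u : R := ln (1 + expR u).

Lemma sigmoid_gt0 u : 0 < sigmoid u.
Proof. by rewrite invr_gt0 addr_gt0 ?expR_gt0. Qed.

Lemma sigmoid_ndecr : {homo sigmoid : u v / u <= v}.
Proof.
move=> u v uv; rewrite lef_pV2 ?posrE ?addr_gt0 ?expR_gt0 //.
by rewrite lerD2l ler_expR lerN2.
Qed.

Lemma sigmoid_le_half u : u <= 0 -> sigmoid u <= 2^-1.
Proof.
move=> u0; rewrite lef_pV2 ?posrE ?addr_gt0 ?expR_gt0 //.
by rewrite -[leLHS]/(1 + 1) lerD2l -expR0 ler_expR oppr_ge0.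
Qed.

Lemma is_derive_sigmoid u : is_derive u 1 sigmoid (sigmoid u * (1 - sigmoid u)).
Proof.
have E0 : 0 < 1 + expR (- u) by rewrite addr_gt0 ?expR_gt0.
have dE : is_derive u 1 (fun v => 1 + expR (- v)) (expR (- u) * -1).
  apply: is_derive_ext (is_deriveD (is_derive_cst (1 : R) u (1 : R))
     (is_derive1_comp (is_derive_expR _) (is_deriveNid u (1 : R)))) _ _ => //=.
  by rewrite add0r.
have dV := is_deriveV (f := fun v => 1 + expR (- v)) (lt0r_neq0 E0) dE.
apply: is_derive_ext dV _ _ => //.
rewrite /sigmoid /GRing.scale /=; field.
by rewrite gt_eqF.
Qed.

Lemma is_derive_softplus u : is_derive u 1 softplus (sigmoid u).
Proof.
have E0 : 0 < 1 + expR u by rewrite addr_gt0 ?expR_gt0.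
have dE : is_derive u 1 (fun v => 1 + expR v) (expR u).
  apply: is_derive_ext
    (is_deriveD (is_derive_cst (1 : R) u (1 : R)) (is_derive_expR u)) _ _ => //.
  by rewrite add0r.
have dL := is_derive1_comp (g := fun v => 1 + expR v) (is_derive1_ln E0) dE.
apply: is_derive_ext dL _ _ => //.
rewrite /sigmoid expRN; have := expR_gt0 u; set E := expR u => E_gt0.
by field; rewrite !gt_eqF ?addr_gt0.
Qed.

End logistic.

Section normr_powR.
Variable R : realType.
Implicit Types x y d : R.

Lemma is_derive_normr x : x != 0 -> is_derive x 1 (fun y => `|y|) (Num.sg x).
Proof.
case: (ltgtP x 0) => // [x_lt0|x_gt0] _.
- apply: near_eq_is_derive (is_derive_ext (is_deriveNid x (1 : R)) _ _) => //.
    by near=> y; rewrite ltr0_norm //; near: y; exact: lt_nbhsl.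
  by rewrite ltr0_sg.
- apply: near_eq_is_derive (is_derive_ext (is_derive_id x (1 : R)) _ _) => //.
    by near=> y; rewrite gtr0_norm //; near: y; exact: lt_nbhsr.
  by rewrite gtr0_sg.
Unshelve. all: by end_near. Qed.

Lemma is_derive_normr_powR d x : x != 0 ->
  is_derive x 1 (fun y => `|y| `^ d) (d * `|x| `^ (d - 1) * Num.sg x).
Proof.
move=> x0; have nx_gt0 : 0 < `|x| by rewrite normr_gt0.
exact: is_derive1_comp (is_derive1_powR d nx_gt0) (is_derive_normr x0).
Qed.

Lemma continuous_normr_powR d : 1 <= d -> continuous (fun x => `|x| `^ d).
Proof.
move=> d_ge1 x; have [->|x0] := eqVneq x 0; last first.
  apply/differentiable_continuous/derivable1_diffP.
  by case: (is_derive_normr_powR d x0).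
have d0 : d != 0 by rewrite gt_eqF // (lt_le_trans ltr01).
rewrite /continuous_at normr0 powR0 //; apply/cvgrPdist_le => e e_gt0.
near=> z; rewrite sub0r normrN ger0_norm ?powR_ge0 //.
have z_le : `|z| <= Num.min 1 e.
  by near: z; apply: (@nbhs0_le R R^o); rewrite lt_min ltr01 e_gt0.
have [->|z0] := eqVneq z 0; first by rewrite normr0 powR0 // ltW.
have z_le1 : 0 < `|z| <= 1 by rewrite normr_gt0 z0 (le_trans z_le) // ge_min lexx.
apply: le_trans (ge1r_powR z_le1 d_ge1) _.
by rewrite (le_trans z_le) // ge_min lexx orbT.
Unshelve. all: by end_near. Qed.

Lemma sgr_mul_normr_powRD1 d x :
  Num.sg x * `|x| `^ (d + 1) = x * `|x| `^ d.
Proof.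
have [->|x0] := eqVneq x 0; first by rewrite sgr0 !mul0r.
rewrite powRD ?normr_eq0 ?x0 ?implybT // powRr1 // mulrCA mulr_sg_norm.
by rewrite mulrC.
Qed.

End normr_powR.

Lemma mulr_powR_pred_le_sqr (R : realType) (a c d t : R) : 1 <= d -> 0 <= c ->
  a <= c ^+ 2 -> a <= 2 * c + 1 -> 0 < t -> a * t `^ (d - 1) <= (t `^ d + c) ^+ 2.
Proof.
move=> d_ge1 c_ge0 a_le_c2 a_le_2c1 t_gt0.
have P_ge0 : 0 <= t `^ d by exact: powR_ge0.
have T_ge0 : 0 <= t `^ (d - 1) by exact: powR_ge0.
have [t_le1|t_gt1] := leP t 1.
- have : t `^ (d - 1) <= t `^ 0 by apply: ger_powR; rewrite ?t_gt0 // subr_ge0.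
  rewrite powRr0 => T_le1; nra.
- have T_le_P : t `^ (d - 1) <= t `^ d by apply: ler_powR; [exact: ltW | lra].
  have : t `^ 0 <= t `^ d by apply: ler_powR; [exact: ltW | lra].
  rewrite powRr0 => P_ge1; nra.
Qed.

Section normalized_softplus_loss.
Variables (R : realType) (g d c : R).
Hypotheses (g_gt0 : 0 < g) (d_ge1 : 1 <= d) (c_ge0 : 0 <= c).
Implicit Types x y : R.

(* Q, q, p, H of the statement in the variable x = alpha (z - beta): Hsc alpha beta
   gamma d c z is convertible to Hn (alpha * (z - beta)), and link = Hn'. *)
Definition Qn x := Num.sg x / (d + 1) * `|x| `^ (d + 1) + c * x.
Definition qn x := `|x| `^ d + c.
Definition pn x := sigmoid (Qn x / g).
Definition Hn x := g * softplus (Qn x / g).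
Definition link x := qn x * pn x.

Let d_gt0 : 0 < d. Proof. exact: lt_le_trans ltr01 d_ge1. Qed.

Lemma QnE x : Qn x = x * (`|x| `^ d / (d + 1) + c).
Proof. by rewrite /Qn mulrAC sgr_mul_normr_powRD1; ring. Qed.

Lemma qn_ge0 x : 0 <= qn x.
Proof. by rewrite addr_ge0 ?powR_ge0. Qed.

Lemma is_derive_Qn x : is_derive x 1 Qn (qn x).
Proof.
have d1_neq0 : d + 1 != 0 by rewrite gt_eqF ?addr_gt0.
have [->|x0] := eqVneq x 0.
  (* |y|^d need not be differentiable at 0, so the product rule is unavailable. *)
  apply/is_derive1_caratheodory; exists (fun z => `|z| `^ d / (d + 1) + c); split.
  - by move=> z; rewrite !QnE; ring.
  - apply: continuousD; last exact: cst_continuous.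
    by apply: continuousM; [exact: continuous_normr_powR | exact: cst_continuous].
  - by rewrite /qn normr0 powR0 ?gt_eqF // mul0r.
have dQ : is_derive x 1 (fun y => (d + 1)^-1 * (y * `|y| `^ d) + c * y)
    ((d + 1)^-1 * (x * (d * `|x| `^ (d - 1) * Num.sg x) + `|x| `^ d * 1) + c * 1).
  exact: is_deriveD (is_deriveZ _ (is_deriveM (is_derive_id x (1 : R))
    (is_derive_normr_powR d x0))) (is_deriveZ c (is_derive_id x (1 : R))).
apply: is_derive_ext dQ _ _ => [y|]; first by rewrite QnE; ring.
have -> : x * (d * `|x| `^ (d - 1) * Num.sg x) = d * (`|x| * `|x| `^ (d - 1)).
  by rewrite normrEsg; ring.
by rewrite mulr_powRB1 // /qn; field.
Qed.

Lemma Qn_ndecr : {homo Qn : x y / x <= y}.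
Proof.
move=> x y xy; apply: (is_derive_ge0_le xy (f' := qn)) => [|z _|z _].
- by move=> z; apply: is_derive_continuous_at (is_derive_Qn z).
- exact: is_derive_Qn.
- exact: qn_ge0.
Qed.

Lemma Qn_le0 x : x <= 0 -> Qn x <= 0.
Proof. by move/Qn_ndecr; rewrite [Qn 0]QnE mul0r. Qed.

Lemma pn_ge0 x : 0 <= pn x.
Proof. exact/ltW/sigmoid_gt0. Qed.

Lemma pn_ndecr : {homo pn : x y / x <= y}.
Proof.
by move=> x y xy; apply: sigmoid_ndecr; rewrite ler_pM2r ?invr_gt0 ?Qn_ndecr.
Qed.

Lemma pn_le_half x : x <= 0 -> pn x <= 2^-1.
Proof.
move=> x0; apply/sigmoid_le_half/mulr_le0_ge0; first exact: Qn_le0.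
by rewrite invr_ge0 ltW.
Qed.

Lemma is_derive_scaled_Qn x : is_derive x 1 (fun y => g^-1 * Qn y) (g^-1 * qn x).
Proof. exact: is_deriveZ _ (is_derive_Qn x). Qed.

Lemma is_derive_pn x : is_derive x 1 pn (pn x * (1 - pn x) * (qn x / g)).
Proof.
have dP := is_derive1_comp (is_derive_sigmoid _) (is_derive_scaled_Qn x).
apply: is_derive_ext dP _ _.
  by move=> y; rewrite /pn mulrC.
by rewrite /pn [Qn x / g]mulrC [qn x / g]mulrC.
Qed.

Lemma is_derive_Hn x : is_derive x 1 Hn (link x).
Proof.
have dH : is_derive x 1 (fun y => g * softplus (g^-1 * Qn y))
    (g * (sigmoid (g^-1 * Qn x) * (g^-1 * qn x))).
  exact: is_deriveZ _ (is_derive1_comp (is_derive_softplus _) (is_derive_scaled_Qn x)).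
apply: is_derive_ext dH _ _ => [y|]; first by rewrite /Hn [Qn y / g]mulrC.
by rewrite /link /pn [Qn x / g]mulrC; field; rewrite gt_eqF.
Qed.

Lemma is_derive_qn x : x != 0 -> is_derive x 1 qn (d * `|x| `^ (d - 1) * Num.sg x).
Proof.
move=> x0; have dq : is_derive x 1 qn (d * `|x| `^ (d - 1) * Num.sg x + 0).
  exact: is_deriveD (is_derive_normr_powR d x0) (is_derive_cst c x (1 : R)).
by rewrite addr0 in dq.
Qed.

Lemma continuous_link : continuous link.
Proof.
move=> x; apply: continuousM.
  by apply: continuousD; [exact: continuous_normr_powR | exact: cst_continuous].
by apply: is_derive_continuous_at (is_derive_pn x).
Qed.

Lemma link_ndecr_ge0 x y : 0 <= x -> x <= y -> link x <= link y.
Proof.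
move=> x0 xy; apply: ler_pM; rewrite ?qn_ge0 ?pn_ge0 ?pn_ndecr //.
have y0 := le_trans x0 xy.
rewrite /qn lerD2r (ger0_norm x0) (ger0_norm y0).
by apply: (ge0_ler_powR (ltW d_gt0)) xy; rewrite nnegrE.
Qed.

Hypotheses (c_sq : 2 * g * d <= c ^+ 2) (c_lin : 2 * g * d <= 2 * c + 1).

Lemma link_derive_ge0 x : x < 0 ->
  0 <= qn x * (pn x * (1 - pn x) * (qn x / g))
       + pn x * (d * `|x| `^ (d - 1) * Num.sg x).
Proof.
move=> x0; rewrite ltr0_sg //.
have nx_gt0 : 0 < `|x| by rewrite normr_gt0 ltr0_neq0.
have := mulr_powR_pred_le_sqr d_ge1 c_ge0 c_sq c_lin nx_gt0.
rewrite -/(qn x); set q := qn x; set T := `|x| `^ (d - 1); set p := pn x => key.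
have p_ge0 : 0 <= p := pn_ge0 x.
have p_le : p <= 2^-1 := pn_le_half (ltW x0).
have -> : q * (p * (1 - p) * (q / g)) + p * (d * T * -1)
    = p * (q ^+ 2 * (1 - p) - g * d * T) / g by field; rewrite gt_eqF.
apply: divr_ge0 (ltW g_gt0); apply: mulr_ge0 p_ge0 _.
have q2_ge0 : 0 <= q ^+ 2 := sqr_ge0 q.
nra.
Qed.

Lemma link_ndecr_le0 x y : x <= y -> y <= 0 -> link x <= link y.
Proof.
move=> xy y0; apply: (is_derive_ge0_le xy continuous_link) => z /andP[_ zy].
  have z0 : z < 0 := lt_le_trans zy y0.
  exact: is_deriveM (is_derive_qn (ltr0_neq0 z0)) (is_derive_pn z).
exact/link_derive_ge0/(lt_le_trans zy y0).
Qed.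

Lemma link_ndecr : {homo link : x y / x <= y}.
Proof.
move=> x y xy; have [y0|y_gt0] := leP y 0; first exact: link_ndecr_le0.
have [x0|x_lt0] := leP 0 x; first exact: link_ndecr_ge0.
apply: (@le_trans _ _ (link 0)); first exact: link_ndecr_le0 (ltW x_lt0) _.
exact: link_ndecr_ge0 _ (ltW y_gt0).
Qed.

Lemma convex_Hn : convex_on_R Hn.
Proof. exact: convex_on_R_is_derive is_derive_Hn link_ndecr. Qed.

End normalized_softplus_loss.

Theorem corollaryG5 (R : realType) (alpha beta gamma d c : R) :
  0 < alpha -> 0 < gamma -> 1 <= d ->
  Num.max (Num.sqrt (2 * gamma * d)) (gamma * d - 2^-1) <= c ->
  forall s : R, convex_on_R (fun shat => Lm alpha beta gamma d c shat s).
Proof.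
(* Convexity survives any affine change of variable, whatever the sign of alpha. *)
move=> _ gamma_gt0 d_ge1; rewrite ge_max => /andP[sqrt_le_c gd_le_c] s.
have c_ge0 : 0 <= c := le_trans (sqrtr_ge0 _) sqrt_le_c.
have gd_ge0 : 0 <= 2 * gamma * d.
  by rewrite !mulr_ge0 ?ltW ?(lt_le_trans ltr01 d_ge1).
have c_sq : 2 * gamma * d <= c ^+ 2.
  by rewrite -(sqr_sqrtr gd_ge0) lerXn2r ?nnegrE ?sqrtr_ge0.
have c_lin : 2 * gamma * d <= 2 * c + 1 by lra.
apply: convex_on_R_bregman.
exact: convex_on_R_comp_affine (convex_Hn gamma_gt0 d_ge1 c_ge0 c_sq c_lin).
Qed.
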